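(* Let $G$ be a finite group and $f\in\mathrm{Aut}(G)$ such that $\mathrm{GAlex}(G,f)$ is connected. If $\mathrm{GAlex}(G,f)\cong\Lambda\times_\phi Q$ for some quandle $Q$, group $\Lambda$ and function $\phi:Q\times Q\to\Lambda$ with $|\Lambda|=|\mathrm{Fix}(G,f)|$, then $\Lambda\cong\mathrm{Fix}(G,f)$ as groups. Hence if $\mathrm{Fix}(G,f)$ is not abelian, then $\Lambda\times_\phi Q$ is not an abelian extension of $Q$.
   Context: A quandle is a set with operation $*$ satisfying $a*a=a$; unique right division; $(a*b)*c=(a*c)*(b*c)$. Connected means the group generated by the right translations $R_a(y)=y*a$ acts transitively. $\mathrm{GAlex}(G,f)$ is the quandle on $G$ with $a*b=f(ab^{-1})b$; $\mathrm{Fix}(G,f)=\{x\in G: f(x)=x\}$. For a group $\Lambda$ and $\phi:Q\times Q\to\Lambda$, $\Lambda\times_\phi Q$ is $\Lambda\times Q$ with $(\lambda,a)*(\mu,b)=(\lambda\phi(a,b),a*b)$, assumed to be a quandle; it is called an abelian extension of $Q$ when $\Lambda$ is abelian. *)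

From HB Require Import structures.
From mathcomp Require Import all_boot all_order all_fingroup.
From Stdlib Require Import Relations.
Set Implicit Arguments. Unset Strict Implicit. Unset Printing Implicit Defensive.

Definition is_quandle (T : Type) (op : T -> T -> T) : Prop :=
  [/\ (forall a, op a a = a),
      (forall a b, exists! c, op c a = b)
    & (forall a b c, op (op a b) c = op (op a c) (op b c))].

(* One step of the action of a generator R_a^{+-1} of the group generated by
   the right translations R_a(y) = y * a:  y = R_a x  or  x = R_a y
   (the latter meaning y = R_a^{-1} x). *)
Definition rtrans_step (T : Type) (op : T -> T -> T) (x y : T) : Prop :=
  exists a, op x a = y \/ op y a = x.

(* Connected: the group generated by the right translations acts transitively,
   i.e. every y is obtained from every x by a finite word in the R_a^{+-1}. *)
Definition quandle_connected (T : Type) (op : T -> T -> T) : Prop :=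
  forall x y, clos_refl_trans T (rtrans_step op) x y.

Local Open Scope group_scope.

Definition galex_op (gT : finGroupType) (f : gT -> gT) (a b : gT) : gT :=
  f (a * b^-1) * b.

Definition Fix_set (gT : finGroupType) (f : gT -> gT) : {set gT} :=
  [set x | f x == x].

Definition ext_op (lT : finGroupType) (Q : Type) (opQ : Q -> Q -> Q)
  (phi : Q -> Q -> lT) (x y : lT * Q) : lT * Q :=
  (x.1 * phi x.2 y.2, opQ x.2 y.2).

Definition quandle_iso (A B : Type) (opA : A -> A -> A) (opB : B -> B -> B)
  (h : A -> B) : Prop :=
  bijective h /\ forall a b, h (opA a b) = opB (h a) (h b).

(* Left multiplication by m on the fibre coordinate of Lambda x_phi Q commutes with
   every right translation of the extension.  Transported to GAlex(G, f), it gives a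
   map commuting with all right translations R_b; since GAlex(G, f) is connected such
   a map is determined by the image z_m of 1, and is left multiplication by z_m, a
   fixed point of f.  Hence m |-> z_m is an injective homomorphism Lambda -> Fix(G, f),
   and an isomorphism because both groups have the same order. *)
From mathcomp Require Import all_boot all_order all_fingroup.
From Stdlib Require Import Relations.
Set Implicit Arguments. Unset Strict Implicit. Unset Printing Implicit Defensive.
Local Open Scope group_scope.

Section GeneralizedAlexander.

Variables (gT : finGroupType) (f : {perm gT}).
Hypothesis fM : {morph f : x y / x * y}.

Lemma perm_morph1 : f 1 = 1.
Proof. by apply: (mulgI (f 1)); rewrite -fM !mulg1. Qed.

Lemma Fix_set_group_set : group_set (Fix_set f).
Proof.
apply/group_setP; split=> [|x y]; first by rewrite inE perm_morph1.
by rewrite !inE => /eqP fx /eqP fy; rewrite fM fx fy.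
Qed.

Lemma galex_op11 : galex_op f 1 1 = 1.
Proof. by rewrite /galex_op invg1 !mulg1 perm_morph1. Qed.

Lemma galex_opFixl z x a :
  z \in Fix_set f -> galex_op f (z * x) a = z * galex_op f x a.
Proof. by rewrite inE => /eqP fz; rewrite /galex_op -mulgA fM fz mulgA. Qed.

Lemma galex_opIl a : injective (galex_op f ^~ a).
Proof. by move=> u v; rewrite /galex_op => /mulIg /perm_inj /mulIg. Qed.

Variable s : gT -> gT.
Hypothesis s_galex : forall x b, s (galex_op f x b) = galex_op f (s x) b.

Lemma galex_equivariant_Fix : s 1 \in Fix_set f.
Proof.
by rewrite inE -{2}galex_op11 s_galex /galex_op invg1 !mulg1.
Qed.

(* The set of x with s x = s 1 * x is stable under every R_b and R_b^-1. *)
Lemma galex_equivariant_mull :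
  quandle_connected (galex_op f) -> forall x, s x = s 1 * x.
Proof.
move=> conn x; have sFix := galex_equivariant_Fix.
suff: forall u v, clos_refl_trans gT (rtrans_step (galex_op f)) u v ->
    s u = s 1 * u -> s v = s 1 * v by move/(_ 1 x (conn 1 x)); rewrite mulg1; apply.
move=> u v; elim=> {u v} [u v [a [<-|ua]] su|//|u v w _ IHuv _ IHvw su].
- by rewrite s_galex su galex_opFixl.
- by apply: (@galex_opIl a); rewrite galex_opFixl // -s_galex ua.
- exact: IHvw (IHuv su).
Qed.

End GeneralizedAlexander.

Section ExtensionTranslation.

Variables (lT : finGroupType) (Q : Type) (opQ : Q -> Q -> Q) (phi : Q -> Q -> lT).

Definition ext_mull (m : lT) (x : lT * Q) : lT * Q := (m * x.1, x.2).

Lemma ext_op_mull m x y :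
  ext_op opQ phi (ext_mull m x) y = ext_mull m (ext_op opQ phi x y).
Proof. by rewrite /ext_op /ext_mull /= mulgA. Qed.

Lemma ext_mullM m n x : ext_mull (m * n) x = ext_mull m (ext_mull n x).
Proof. by rewrite /ext_mull /= mulgA. Qed.

Lemma ext_mullIg x : injective (ext_mull ^~ x).
Proof. by move=> m n [/mulIg]. Qed.

End ExtensionTranslation.

Section TransportToFix.

Variables (gT : finGroupType) (f : {perm gT}).
Hypothesis fM : {morph f : x y / x * y}.
Hypothesis conn : quandle_connected (galex_op f).
Variables (lT : finGroupType) (Q : Type) (opQ : Q -> Q -> Q) (phi : Q -> Q -> lT).
Variables (h : gT -> lT * Q) (g : lT * Q -> gT).
Hypotheses (hK : cancel h g) (gK : cancel g h).
Hypothesis hM : forall a b, h (galex_op f a b) = ext_op opQ phi (h a) (h b).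

Definition fibre_mull (m : lT) (x : gT) : gT := g (ext_mull m (h x)).

Definition fix_of (m : lT) : gT := fibre_mull m 1.

Lemma fibre_mull_galex m x b :
  fibre_mull m (galex_op f x b) = galex_op f (fibre_mull m x) b.
Proof. by apply: (can_inj hK); rewrite /fibre_mull !hM !gK ext_op_mull. Qed.

Lemma fibre_mull_Fixl m x : fibre_mull m x = fix_of m * x.
Proof. exact (galex_equivariant_mull fM (fibre_mull_galex m) conn x). Qed.

Lemma fix_of_Fix m : fix_of m \in Fix_set f.
Proof. exact (galex_equivariant_Fix fM (fibre_mull_galex m)). Qed.

Lemma fix_ofM : {morph fix_of : m n / m * n}.
Proof. by move=> m n; rewrite -fibre_mull_Fixl /fix_of /fibre_mull gK -ext_mullM. Qed.

Lemma fix_of_inj : injective fix_of.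
Proof. by move=> m n /(can_inj gK) /ext_mullIg. Qed.

End TransportToFix.

Theorem mainTheorem15 (gT : finGroupType) (f : {perm gT})
  (Hf : f \in Aut [set: gT])
  (Hconn : quandle_connected (galex_op f))
  (lT : finGroupType) (Q : Type) (opQ : Q -> Q -> Q) (phi : Q -> Q -> lT)
  (HQ : is_quandle opQ) (Hext : is_quandle (ext_op opQ phi))
  (h : gT -> lT * Q) (Hh : quandle_iso (galex_op f) (ext_op opQ phi) h)
  (Hcard : #|[set: lT]| = #|Fix_set f|) :
  (Fix_set f \isog [set: lT])
  /\ (~~ abelian (Fix_set f) -> ~~ abelian [set: lT]).
Proof.
have fM : {morph f : x y / x * y}.
  by move=> x y; have /morphicP-> := Aut_morphic Hf; rewrite ?inE.
case: Hh => [[g hK gK] hM].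
pose FixG := Group (Fix_set_group_set fM).
pose zmor := @Morphism _ _ [set: lT] _ (in2W (fix_ofM fM Hconn hK gK hM)).
have zinj : 'injm zmor by apply/injmP; exact: in2W (fix_of_inj gK).
have zim : zmor @* [set: lT] = FixG.
  apply/eqP; rewrite eqEcard card_injm // Hcard leqnn andbT.
  by apply/subsetP => _ /morphimP[m _ _ ->]; exact: (fix_of_Fix fM hK gK hM m).
have FixG_isog : FixG \isog [set: lT]%G by rewrite isog_sym; apply/isogP; exists zmor.
by split=> //; rewrite (isog_abelian FixG_isog).
Qed.
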